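(* There is an algorithm that, given two strings $A$ and $B$ each of length at most $n$, computes a minimal common supersequence of $A$ and $B$ in $O(n)$ time.
   Context: $X\subseteq S$ means $X$ is a (not necessarily contiguous) subsequence of $S$. A common supersequence of $A$ and $B$ is a string $C$ with $A\subseteq C$ and $B\subseteq C$; it is minimal if no proper subsequence of $C$ is a common supersequence of $A$ and $B$. Time is measured in the standard RAM model with $O(1)$-time character comparisons. *)

From mathcomp Require Import all_boot.
Set Implicit Arguments. Unset Strict Implicit. Unset Printing Implicit Defensive.

Definition common_supersequence (T : eqType) (A B C : seq T) : bool :=
  subseq A C && subseq B C.

Definition minimal_common_supersequence (T : eqType) (A B C : seq T) : Prop :=
  common_supersequence A B C /\
  forall C' : seq T, subseq C' C -> C' <> C -> ~~ common_supersequence A B C'.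

(** The two input strings are read-only; characters can only be compared
   for equality (O(1) character comparisons) and copied to the output. *)
Inductive src := SrcA | SrcB.

Inductive instr :=
| IConst (d v : nat)
| IAdd (d a b : nat)
| ISub (d a b : nat)                      (* r_d := r_a - r_b (truncated) *)
| ILoad (d a : nat)
| IStore (a s : nat)
| ILen (d : nat) (x : src)
| IJlt (a b l : nat)
| IJeq (a b l : nat)
| IJchr (x : src) (a : nat) (y : src) (b l : nat)
| IOut (x : src) (a : nat)
| IHalt.

Record state (T : Type) := State {
  st_pc : nat;
  st_reg : nat -> nat;
  st_mem : nat -> nat;
  st_out : seq T }.

Definition upd (f : nat -> nat) (i v : nat) : nat -> nat :=
  fun j => if j == i then v else f j.

Section Machine.
Variables (T : eqType) (P : seq instr) (A B : seq T).

Definition input (x : src) : seq T := match x with SrcA => A | SrcB => B end.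

Definition init_state : state T := State 0 (fun _ => 0) (fun _ => 0) [::].

(* One step; [None] means the machine crashed. A halted machine stays put. *)
Definition step (s : state T) : option (state T) :=
  let: State pc r m o := s in
  match onth P pc with
  | None => None
  | Some i =>
    match i with
    | IConst d v => Some (State pc.+1 (upd r d v) m o)
    | IAdd d a b => Some (State pc.+1 (upd r d (r a + r b)) m o)
    | ISub d a b => Some (State pc.+1 (upd r d (r a - r b)) m o)
    | ILoad d a => Some (State pc.+1 (upd r d (m (r a))) m o)
    | IStore a s' => Some (State pc.+1 r (upd m (r a) (r s')) o)
    | ILen d x => Some (State pc.+1 (upd r d (size (input x))) m o)
    | IJlt a b l => Some (State (if r a < r b then l else pc.+1) r m o)
    | IJeq a b l => Some (State (if r a == r b then l else pc.+1) r m o)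
    | IJchr x a y b l =>
        match onth (input x) (r a), onth (input y) (r b) with
        | Some c1, Some c2 => Some (State (if c1 == c2 then l else pc.+1) r m o)
        | _, _ => None
        end
    | IOut x a =>
        match onth (input x) (r a) with
        | Some c => Some (State pc.+1 r m (rcons o c))
        | None => None
        end
    | IHalt => Some s
    end
  end.

Fixpoint exec (k : nat) : option (state T) :=
  match k with
  | 0 => Some init_state
  | k'.+1 => match exec k' with Some s => step s | None => None end
  end.

Definition halted (s : state T) : bool :=
  if onth P (st_pc s) is Some IHalt then true else false.

Definition halts_within (t : nat) (C : seq T) : Prop :=
  exists k, k <= t /\ exists s, exec k = Some s /\ halted s /\ st_out s = C.

End Machine.

(* A minimal common supersequence is built right to left:
   mcs (A a) (B b) is mcs A B followed by a when a = b; otherwise it is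
   C := mcs A (B b), followed by a only if A a is not already a subsequence
   of C.  Minimality is proved by induction on the mirror-image recursion;
   the key fact is that a minimal common supersequence C of A and B cannot
   contain both a :: A and a :: B, since cutting C after its first a would
   leave a smaller one.

   The machine computes this string in three linear passes.  A right-to-left
   greedy scan marks the rightmost embedding of the longest suffix B[j0..] of
   B into A.  The machine then outputs B[..j0) and walks through A, emitting
   A[i] when it is marked or when A[..i] is not yet a subsequence of the
   output; the latter test is a comparison with the length of the greedy
   left-to-right match of A in the output, maintained in O(1) per letter.
   The scan invariant makes each emission agree with the recursion above. *)

From mathcomp Require Import all_boot zify.
Set Implicit Arguments. Unset Strict Implicit. Unset Printing Implicit Defensive.

Lemma take_rcons_onth (U : Type) (s : seq U) k x :
  onth s k = Some x -> take k.+1 s = rcons (take k s) x.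
Proof.
move=> sk; have lt_ks : k < size s by rewrite -onthTE sk.
by rewrite (take_nth x lt_ks) (@onth_nth _ x x s k sk).
Qed.

Lemma onth_exists (U : Type) (s : seq U) k : k < size s -> exists x, onth s k = Some x.
Proof. by rewrite -onthTE; case: onth => // x _; exists x. Qed.

Section MinimalSupersequence.
Variable T : eqType.
Implicit Types (A B C : seq T) (a b : T).

Fixpoint mcs_front A B : seq T :=
  match A, B with
  | [::], _ => B
  | _, [::] => A
  | a :: A1, b :: B1 =>
      if a == b then a :: mcs_front A1 B1
      else let C1 := mcs_front A1 B in if subseq A C1 then C1 else a :: C1
  end.

Lemma mcs_front_common A B : common_supersequence A B (mcs_front A B).
Proof.
rewrite /common_supersequence.
elim: A B => [|a A1 IH] [|b B1]; rewrite /= ?eqxx ?subseq_refl ?andbT ?sub0seq //.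
have [<-|neq_ab] := eqVneq a b; first by rewrite /= eqxx.
have /andP[subA1 subB] := IH (b :: B1).
case: ifP => [-> //|_].
by rewrite /= eqxx subA1 eq_sym (negbTE neq_ab).
Qed.

Lemma subseq_drop_index a A C :
  subseq (a :: A) C -> subseq A (drop (index a C).+1 C).
Proof.
elim: C => [//|c C IH] /=.
by have [_|_] := eqVneq a c; [rewrite drop0 | apply: IH].
Qed.

Lemma minimal_cs_no_common_cons a A B C :
  (forall C', subseq C' C -> subseq A C' -> subseq B C' -> C' = C) ->
  subseq (a :: A) C -> subseq (a :: B) C -> False.
Proof.
move=> minC aAC aBC; have C_gt0 : 0 < size C by case: C {minC aBC} aAC.
have := minC _ (drop_subseq _ _) (subseq_drop_index aAC) (subseq_drop_index aBC).
by move/(f_equal size); rewrite size_drop; lia.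
Qed.

Lemma mcs_front_min A B C :
  subseq C (mcs_front A B) -> subseq A C -> subseq B C -> C = mcs_front A B.
Proof.
elim: A B C => [|a A1 IH] B C; first by move=> C_G _ B_C; apply/subseq_anti/andP.
case: B => [|b B1]; first by move=> C_G A_C _; apply/subseq_anti/andP.
rewrite [mcs_front _ _]/=; have [<-|neq_ab] := eqVneq a b.
  case: C => [//|c C] C_G A_C B_C.
  have [eq_ca|neq_ca] := eqVneq c a.
    move: C_G A_C B_C; rewrite eq_ca /= eqxx => C_G A_C B_C.
    by rewrite (IH _ _ C_G A_C B_C).
  move: C_G; rewrite /= (negbTE neq_ca) => C_G.
  exfalso; apply: (minimal_cs_no_common_cons (IH B1)).
    exact: subseq_trans A_C C_G.
  exact: subseq_trans B_C C_G.
case: ifP => [AG1|nAG1] C_G A_C B_C.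
  by apply: IH => //; apply: subseq_trans A_C; apply: subseq_cons.
case: C C_G A_C B_C => [//|c C]; rewrite [subseq (c :: _) _]/=.
have [->|neq_ca] := eqVneq c a.
  rewrite /= !eqxx eq_sym (negbTE neq_ab) => C_G A_C B_C.
  by rewrite (IH _ _ C_G A_C B_C).
by move=> C_G A_C _; move: nAG1; rewrite (subseq_trans A_C C_G).
Qed.

Definition mcs A B := rev (mcs_front (rev A) (rev B)).

Lemma mcs_common A B : common_supersequence A B (mcs A B).
Proof.
have /andP[] := mcs_front_common (rev A) (rev B).
by rewrite /common_supersequence -(subseq_rev A) -(subseq_rev B) revK => -> ->.
Qed.

Lemma mcs_minimal A B : minimal_common_supersequence A B (mcs A B).
Proof.
split; first exact: mcs_common.
move=> C CF neq_CF; apply: contra_notN neq_CF => /andP[A_C B_C].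
move: CF A_C B_C; rewrite /mcs -(subseq_rev C) -(subseq_rev A) -(subseq_rev B) revK.
by move=> C_G A_C B_C; rewrite -(mcs_front_min C_G A_C B_C) revK.
Qed.

Lemma mcs0s B : mcs [::] B = B.
Proof. by rewrite /mcs /= revK. Qed.

Lemma mcss0 A : mcs A [::] = A.
Proof. by rewrite /mcs /=; case: (rev A) (revK A) => //= _ _ <-. Qed.

Lemma mcs_rcons A a B b :
  mcs (rcons A a) (rcons B b) =
  if a == b then rcons (mcs A B) a
  else if subseq (rcons A a) (mcs A (rcons B b)) then mcs A (rcons B b)
       else rcons (mcs A (rcons B b)) a.
Proof.
rewrite /mcs !rev_rcons /=; case: (a == b); first by rewrite rev_cons.
rewrite -[rcons A a]revK rev_rcons -[a :: rev A]revK subseq_rev !revK.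
by case: ifP => //; rewrite rev_cons.
Qed.

Fixpoint prefix_match A C : nat :=
  match C, A with
  | [::], _ | _, [::] => 0
  | c :: C', a :: A' =>
      if a == c then (prefix_match A' C').+1 else prefix_match A C'
  end.

Lemma subseq_take_prefix_match A C k :
  k <= size A -> subseq (take k A) C = (k <= prefix_match A C).
Proof.
elim: C A k => [|c C IH] [|a A] [|k] //= le_kA.
by case: ifP => _; [rewrite IH | rewrite -(IH (a :: A) k.+1)].
Qed.

Lemma prefix_match_leq_size_r C A : prefix_match A C <= size C.
Proof.
elim: C A => [|c C IH] [|a A] //=; case: ifP => _; first exact: IH.
exact: leq_trans (IH (a :: A)) (leqnSn _).
Qed.

Lemma prefix_match_leq_size_l A C : prefix_match A C <= size A.
Proof.
by elim: C A => [|c C IH] [|a A] //=; case: ifP => _; [apply: IH | apply: IH (a :: A)].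
Qed.

Lemma prefix_match_rcons A C c :
  prefix_match A (rcons C c) =
  if onth A (prefix_match A C) == Some c then (prefix_match A C).+1
  else prefix_match A C.
Proof.
elim: C A => [|c' C IH] [|a A] //=.
by case: ifP => _; rewrite IH //=; case: ifP.
Qed.

Lemma prefix_match_take A i : i <= size A -> prefix_match A (take i A) = i.
Proof.
move=> le_iA; apply/eqP; rewrite eqn_leq -subseq_take_prefix_match // subseq_refl andbT.
by rewrite (leq_trans (prefix_match_leq_size_r _ _)) // size_take_min geq_minl.
Qed.
Lemma mcs_take_match A B i j a :
  onth A i = Some a -> onth B j = Some a ->
  mcs (take i.+1 A) (take j.+1 B) = rcons (mcs (take i A) (take j B)) a.
Proof. by move=> Ai Bj; rewrite (take_rcons_onth Ai) (take_rcons_onth Bj) mcs_rcons eqxx. Qed.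

Lemma mcs_take_mismatch A B i j a :
  onth A i = Some a -> j <= size B -> (0 < j -> onth B j.-1 != Some a) ->
  let C := mcs (take i A) (take j B) in
  mcs (take i.+1 A) (take j B) = if prefix_match A C <= i then rcons C a else C.
Proof.
move=> Ai le_jB lastB C; have lt_iA : i < size A by rewrite -onthTE Ai.
case: j le_jB lastB @C => [|j] le_jB lastB C.
  by rewrite /C !take0 !mcss0 prefix_match_take ?leqnn ?(take_rcons_onth Ai) // ltnW.
have [b Bj] := onth_exists le_jB.
have neq_ab : a != b by apply: contraNneq (lastB isT) => ->; rewrite Bj.
rewrite /C (take_rcons_onth Ai) (take_rcons_onth Bj) mcs_rcons (negbTE neq_ab).
rewrite -(take_rcons_onth Bj) -(take_rcons_onth Ai) subseq_take_prefix_match //.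
by rewrite ltnNge if_neg.
Qed.
End MinimalSupersequence.

Section Execution.
Variables (T : eqType) (P : seq instr) (A B : seq T).

Fixpoint run (s : state T) (k : nat) : option (state T) :=
  if k is k'.+1 then (if step P A B s is Some s' then run s' k' else None)
  else Some s.

Lemma run_addn s s1 k1 k2 : run s k1 = Some s1 -> run s (k1 + k2) = run s1 k2.
Proof. by elim: k1 s => [|k1 IH] s /=; [case=> -> | case: step => // s'; apply: IH]. Qed.

Lemma exec_run k : exec P A B k = run (init_state T) k.
Proof.
suff run_last s k' : run s k'.+1 = if run s k' is Some s' then step P A B s' else None.
  by elim: k => [//|k IH]; rewrite run_last /= IH.
by elim: k' s => [|k' IH] s /=; case: step => // s'; rewrite ?IH.
Qed.

Definition reaches (s s' : state T) (t : nat) := exists2 k, k <= t & run s k = Some s'.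

Lemma reaches_refl s t : reaches s s t.
Proof. by exists 0. Qed.

Lemma reaches_step s s1 s' t :
  0 < t -> step P A B s = Some s1 -> reaches s1 s' t.-1 -> reaches s s' t.
Proof. by case: t => // t _ step_s [k le_kt run_k]; exists k.+1; rewrite //= step_s. Qed.

Lemma reaches_trans s1 s2 s3 t1 t2 :
  reaches s1 s2 t1 -> reaches s2 s3 t2 -> reaches s1 s3 (t1 + t2).
Proof.
by move=> [k1 le1 run1] [k2 le2 run2]; exists (k1 + k2); [lia | rewrite (run_addn _ run1)].
Qed.

Lemma reaches_leq s s' t t' : t <= t' -> reaches s s' t -> reaches s s' t'.
Proof. by move=> le_tt' [k le_kt run_k]; exists k => //; apply: leq_trans le_tt'. Qed.

Lemma reaches_halts_within s t :
  reaches (init_state T) s t -> halted P s -> halts_within P A B t (st_out s).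
Proof. by move=> [k le_kt run_k] halt_s; exists k; split=> //; exists s; rewrite exec_run. Qed.

End Execution.

(* Symbolic execution of a program: [exec_steps] unfolds [step] and rewrites
   with the hypotheses fixing registers ([r n = v]), input letters and branch
   conditions until the next instruction is determined; [exec_reaches] runs
   until the target state is first matched. *)
Ltac use_facts :=
  match goal with
  | H : ?r ?n = _ |- context [?r ?n] => is_var r; rewrite H
  | H : onth ?s ?k = _ |- context [onth ?s ?k] => rewrite H
  | H : is_true (~~ ?b) |- context [?b] => rewrite (negbTE H)
  | H : is_true ?b |- context [?b] => rewrite H
  | H : ?b = false |- context [?b] => rewrite H
  end.

Ltac exec_steps :=
  repeat (rewrite /= /upd /= ?subn1 ?addn1 ?eqxx ?(inj_eq (@Some_inj _)) /=; use_facts);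
  rewrite /= /upd /= ?subn1 ?addn1 ?eqxx ?(inj_eq (@Some_inj _)) /=.

Ltac exec_reaches :=
  apply: reaches_step;
  [by [] || lia | exec_steps; reflexivity | first [apply: reaches_refl | exec_reaches]].

Ltac exec_segment := eexists; split; [exec_reaches | by exec_steps].

(* Registers: r0 = 0 and r1 = 1 are constants, r2 is the position i in A,
   r3 the position j in B, r4 the length g of the greedy match of A in the
   output, r5 = |A|, r7 the position in B while copying, r6 and r9 are
   scratch; memory cell l holds 1 iff A[l] is marked.  The loop heads are
   pc 3 (backward scan), 15 (output of B[..j0)) and 24 (pass over A). *)
Definition prog : seq instr := [::
  IConst 1 1; ILen 2 SrcA; ILen 3 SrcB;
  IJeq 2 0 12; IJeq 3 0 12; ISub 2 2 1; ISub 9 3 1; IJchr SrcA 2 SrcB 9 9;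
  IJeq 0 0 3; IStore 2 1; ISub 3 3 1; IJeq 0 0 3;
  ILen 5 SrcA; IConst 4 0; IConst 7 0;
  IJeq 7 3 23; IOut SrcB 7; IJeq 4 5 21; IJchr SrcA 4 SrcB 7 20; IJeq 0 0 21;
  IAdd 4 4 1; IAdd 7 7 1; IJeq 0 0 15;
  IConst 2 0;
  IJeq 2 5 35; ILoad 6 2; IJeq 6 1 28; IJlt 2 4 33;
  IOut SrcA 2; IJeq 4 5 33; IJchr SrcA 4 SrcA 2 32; IJeq 0 0 33;
  IAdd 4 4 1; IAdd 2 2 1; IJeq 0 0 24;
  IHalt].

Definition marks (m : nat -> nat) (a b : nat) := \sum_(a <= l < b) (m l == 1).

Lemma marks_nil m a : marks m a a = 0.
Proof. by rewrite /marks big_geq. Qed.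

Lemma marks_cat m a b c : a <= b -> b <= c -> marks m a c = marks m a b + marks m b c.
Proof. by move=> le_ab le_bc; rewrite /marks (big_cat_nat le_ab le_bc). Qed.

Lemma marks_rcons m a b : a <= b -> marks m a b.+1 = marks m a b + (m b == 1).
Proof. by move=> le_ab; rewrite /marks big_nat_recr. Qed.

Lemma marks_cons m a b : a < b -> marks m a b = (m a == 1) + marks m a.+1 b.
Proof. by move=> lt_ab; rewrite /marks big_ltn. Qed.

Lemma marks_eq0 m a b : (forall l, a <= l < b -> m l = 0) -> marks m a b = 0.
Proof. by move=> m0; rewrite /marks big1_seq // => l /[!mem_index_iota] /m0 ->. Qed.

Lemma marks_upd m i k : i < k -> marks (upd m i 1) i k = (marks m i.+1 k).+1.
Proof.
move=> lt_ik; rewrite marks_cons // /upd eqxx add1n; congr _.+1; rewrite /marks.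
by apply: eq_big_nat => l /andP[lt_il _]; rewrite (gtn_eqF lt_il).
Qed.

Section Program.
Variables (T : eqType) (A B : seq T).

(* After the backward scan has consumed [A[i..]] and [B[j..]], the cells [l]
   with [m l = 1] mark the rightmost embedding of [B[j..]] into [A[i..]]:
   marked letters spell [B[j..]], and an unmarked letter differs from the
   letter of [B] that would have to be matched just before it. *)
Definition scanned i j m :=
  [/\ i <= size A, forall l, l < i -> m l = 0,
      j + marks m i (size A) = size B,
      forall k, i <= k < size A -> m k = 1 -> onth A k = onth B (j + marks m i k) &
      forall k, i <= k < size A -> m k != 1 -> 0 < j + marks m i k ->
        onth A k != onth B (j + marks m i k).-1].

Lemma scanned_init : scanned (size A) (size B) (fun=> 0).
Proof. by split=> // [|k]; [rewrite marks_nil addn0 | rewrite ltnNge andbN]. Qed.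

Lemma scanned_match i j m :
  scanned i.+1 j.+1 m -> onth A i = onth B j -> scanned i j (upd m i 1).
Proof.
case=> lt_iA m0 sizeB marked unmarked eq_ij; split; first exact: ltnW.
- by move=> l lt_li; rewrite /upd ltn_eqF // m0 // ltnW.
- by rewrite marks_upd // addnS.
- move=> k /andP[]; rewrite leq_eqVlt => /predU1P[<- _|lt_ik lt_kA].
    by rewrite marks_nil addn0.
  by rewrite marks_upd // /upd (gtn_eqF lt_ik) addnS; apply: marked; rewrite lt_ik.
move=> k /andP[]; rewrite leq_eqVlt => /predU1P[<- _|lt_ik lt_kA]; first by rewrite /upd eqxx.
by rewrite marks_upd // /upd (gtn_eqF lt_ik) addnS => mk _; apply: unmarked; rewrite ?lt_ik.
Qed.

Lemma scanned_mismatch i j m :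
  scanned i.+1 j.+1 m -> onth A i != onth B j -> scanned i j.+1 m.
Proof.
case=> lt_iA m0 sizeB marked unmarked neq_ij.
have marks_i k : i < k -> marks m i k = marks m i.+1 k.
  by move=> lt_ik; rewrite marks_cons // m0.
split; first exact: ltnW.
- by move=> l lt_li; rewrite m0 // ltnW.
- by rewrite marks_i.
- move=> k /andP[]; rewrite leq_eqVlt => /predU1P[<- _|lt_ik lt_kA]; first by rewrite m0.
  by rewrite marks_i //; apply: marked; rewrite lt_ik.
move=> k /andP[]; rewrite leq_eqVlt => /predU1P[<- _|lt_ik lt_kA].
  by rewrite marks_nil addn0.
by rewrite marks_i //; apply: unmarked; rewrite lt_ik.
Qed.

Lemma scanned_start i m : scanned i 0 m -> scanned 0 0 m.
Proof.
case=> le_iA m0 sizeB marked unmarked.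
have marks_0i k : i <= k -> marks m 0 k = marks m i k.
  by move=> le_ik; rewrite (marks_cat m (leq0n i) le_ik) marks_eq0 // => l /andP[_ /m0].
split=> //; first by rewrite marks_0i.
- move=> k /andP[_ lt_kA]; case: (leqP i k) => [le_ik|/m0 -> //].
  by rewrite marks_0i //; apply: marked; rewrite le_ik.
move=> k /andP[_ lt_kA]; case: (leqP i k) => [le_ik|lt_ki].
  by rewrite marks_0i //; apply: unmarked; rewrite le_ik.
by rewrite add0n marks_eq0 // => l /andP[_ lt_lk]; exact: m0 (leq_trans lt_lk (ltnW lt_ki)).
Qed.

Lemma scan_iter r m i j a b :
  r 0 = 0 -> r 1 = 1 -> r 2 = i.+1 -> r 3 = j.+1 ->
  onth A i = Some a -> onth B j = Some b ->
  exists r', reaches prog A B (State 3 r m [::])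
                (State 3 r' (if a == b then upd m i 1 else m) [::]) 8 /\
    [/\ r' 0 = 0, r' 1 = 1, r' 2 = i & r' 3 = if a == b then j else j.+1].
Proof.
move=> H0 H1 H2 H3 Ea Eb.
by have [eq_ab|neq_ab] := eqVneq a b; [subst b|]; exec_segment.
Qed.

Lemma scan_loop i j r m :
  r 0 = 0 -> r 1 = 1 -> r 2 = i -> r 3 = j -> scanned i j m ->
  exists r' m' j0, reaches prog A B (State 3 r m [::]) (State 12 r' m' [::]) (8 * i + 2) /\
    [/\ r' 0 = 0, r' 1 = 1, r' 3 = j0 & scanned 0 j0 m'].
Proof.
elim: i j r m => [|i IH] j r m H0 H1 H2 H3 scan.
  by exists r, m, j; split; first exec_reaches.
case: j H3 scan => [|j] H3 scan.
  exists r, m, 0; split; first exec_reaches.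
  by split=> //; apply: scanned_start scan.
have lt_iA : i < size A by case: scan.
have lt_jB : j < size B by case: scan => _ _ <- _ _; rewrite addSn ltnS leq_addr.
have [[a Ea] [b Eb]] := (onth_exists lt_iA, onth_exists lt_jB).
have [r' [seg [H0' H1' H2' H3']]] := scan_iter m H0 H1 H2 H3 Ea Eb.
have scan' : scanned i (if a == b then j else j.+1) (if a == b then upd m i 1 else m).
  have [eq_ab|neq_ab] := eqVneq a b.
    by apply: scanned_match; rewrite ?Ea ?Eb ?eq_ab.
  by apply: scanned_mismatch; rewrite // Ea Eb inj_eq //; apply: Some_inj.
have [r'' [m'' [j0 [seg' post]]]] := IH _ _ _ H0' H1' H2' H3' scan'.
exists r'', m'', j0; split=> //.
by apply: reaches_leq (reaches_trans seg seg'); rewrite mulnS addnA.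
Qed.

Lemma scan_phase :
  exists r m j0, reaches prog A B (init_state T) (State 12 r m [::]) (8 * size A + 5) /\
    [/\ r 0 = 0, r 1 = 1, r 3 = j0 & scanned 0 j0 m].
Proof.
pose r0 := upd (upd (upd (fun=> 0) 1 1) 2 (size A)) 3 (size B).
have seg : reaches prog A B (init_state T) (State 3 r0 (fun=> 0) [::]) 3 by exists 3.
have [r [m [j0 [seg' post]]]] :=
  @scan_loop (size A) (size B) r0 _ erefl erefl erefl erefl scanned_init.
exists r, m, j0; split=> //.
by apply: reaches_leq (reaches_trans seg seg'); lia.
Qed.

Lemma copy_iter r m j0 k b :
  r 0 = 0 -> r 1 = 1 -> r 3 = j0 -> r 5 = size A -> r 7 = k ->
  r 4 = prefix_match A (take k B) -> k < j0 -> onth B k = Some b ->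
  exists r', reaches prog A B (State 15 r m (take k B)) (State 15 r' m (take k.+1 B)) 7 /\
    [/\ r' 0 = 0, r' 1 = 1, r' 3 = j0, r' 5 = size A & r' 7 = k.+1 /\
         r' 4 = prefix_match A (take k.+1 B)].
Proof.
move=> H0 H1 H3 H5 H7 H4 /ltn_eqF neq_kj0 Eb.
rewrite (take_rcons_onth Eb) prefix_match_rcons; set g := prefix_match A _ in H4 *.
have [eq_gA|neq_gA] := eqVneq g (size A).
  have Eg : onth A g = None by rewrite onth_default ?eq_gA.
  by move/eqP: eq_gA => eq_gA; exec_segment.
have [a Ea] : exists a, onth A g = Some a.
  by apply: onth_exists; rewrite ltn_neqAle neq_gA prefix_match_leq_size_l.
by have [eq_ab|neq_ab] := eqVneq a b; [subst b|]; exec_segment.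
Qed.

Lemma copy_loop r m j0 k :
  r 0 = 0 -> r 1 = 1 -> r 3 = j0 -> r 5 = size A -> r 7 = k ->
  r 4 = prefix_match A (take k B) -> k <= j0 -> j0 <= size B ->
  exists r', reaches prog A B (State 15 r m (take k B)) (State 23 r' m (take j0 B))
                (7 * (j0 - k) + 1) /\
    [/\ r' 0 = 0, r' 1 = 1, r' 5 = size A & r' 4 = prefix_match A (take j0 B)].
Proof.
move=> + + + + + + + le_j0B; move Ed: (j0 - k) => d.
elim: d k r Ed => [|d IH] k r Ed H0 H1 H3 H5 H7 H4 le_kj0.
  have eq_kj0 : k = j0 by lia.
  rewrite eq_kj0 in H7 H4 *.
  by exists r; split; first exec_reaches.
have lt_kj0 : k < j0 by lia.
have [b Eb] := onth_exists (leq_trans lt_kj0 le_j0B).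
have [r' [seg [H0' H1' H3' H5' [H7' H4']]]] := copy_iter m H0 H1 H3 H5 H7 H4 lt_kj0 Eb.
have [r'' [seg' post]] := IH k.+1 r' ltac:(lia) H0' H1' H3' H5' H7' H4' lt_kj0.
exists r''; split=> //.
by apply: reaches_leq (reaches_trans seg seg'); lia.
Qed.

Lemma copy_phase r m j0 :
  r 0 = 0 -> r 1 = 1 -> r 3 = j0 -> j0 <= size B ->
  exists r', reaches prog A B (State 12 r m [::]) (State 23 r' m (take j0 B)) (7 * j0 + 4) /\
    [/\ r' 0 = 0, r' 1 = 1, r' 5 = size A & r' 4 = prefix_match A (take j0 B)].
Proof.
move=> H0 H1 H3 le_j0B.
pose r0 := upd (upd (upd r 5 (size A)) 4 0) 7 0.
have seg : reaches prog A B (State 12 r m [::]) (State 15 r0 m (take 0 B)) 3.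
  by exists 3; rewrite ?take0.
have [r' [seg' post]] :=
  @copy_loop r0 m j0 0 H0 H1 H3 erefl erefl ltac:(by rewrite take0) (leq0n _) le_j0B.
exists r'; split=> //.
by apply: reaches_leq (reaches_trans seg seg'); lia.
Qed.

Lemma merge_iter r (m : nat -> nat) o i a :
  r 0 = 0 -> r 1 = 1 -> r 5 = size A -> r 2 = i -> r 4 = prefix_match A o ->
  onth A i = Some a ->
  let o' := if (m i == 1) || (prefix_match A o <= i) then rcons o a else o in
  exists r', reaches prog A B (State 24 r m o) (State 24 r' m o') 10 /\
    [/\ r' 0 = 0, r' 1 = 1, r' 5 = size A, r' 2 = i.+1 & r' 4 = prefix_match A o'].
Proof.
move=> H0 H1 H5 H2 H4 Ea o'.
have /ltn_eqF neq_iA : i < size A by rewrite -onthTE Ea.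
rewrite {}/o' leqNgt; set g := prefix_match A o in H4 *.
case: ifP => [emit|/norP[/negbTE nmi /negPn lt_ig]]; last by exec_segment.
have {}emit : m i == 1 \/ (m i == 1) = false /\ (i < g) = false.
  by case: (m i == 1) emit; [left | right; split=> //; apply/negbTE].
rewrite prefix_match_rcons -/g.
have [eq_gA|neq_gA] := eqVneq g (size A).
  have Eg : onth A g = None by rewrite onth_default ?eq_gA.
  by move/eqP: eq_gA => eq_gA; case: emit => [mi|[nmi lt_ig]]; exec_segment.
have [c Ec] : exists c, onth A g = Some c.
  by apply: onth_exists; rewrite ltn_neqAle neq_gA prefix_match_leq_size_l.
by have [eq_ca|neq_ca] := eqVneq c a; [subst c|]; case: emit => [mi|[nmi lt_ig]]; exec_segment.
Qed.

Lemma merge_output j0 (m : nat -> nat) o i a :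
  scanned 0 j0 m -> onth A i = Some a ->
  o = mcs (take i A) (take (j0 + marks m 0 i) B) ->
  (if (m i == 1) || (prefix_match A o <= i) then rcons o a else o) =
  mcs (take i.+1 A) (take (j0 + marks m 0 i.+1) B).
Proof.
case=> _ _ sizeB marked unmarked Ai ->; have lt_iA : i < size A by rewrite -onthTE Ai.
rewrite marks_rcons //; case: (boolP (m i == 1)) => [/eqP mi|nmi] /=.
  rewrite addn1 addnS (mcs_take_match Ai) //.
  by rewrite -Ai (marked _ _ mi).
rewrite addn0 (mcs_take_mismatch Ai) //.
- by rewrite -sizeB leq_add2l (marks_cat m (leq0n i) (ltnW lt_iA)) leq_addr.
- by move=> J_gt0; rewrite -Ai eq_sym; apply: unmarked; rewrite ?lt_iA.
Qed.

Lemma merge_loop j0 m r o i :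
  scanned 0 j0 m -> r 0 = 0 -> r 1 = 1 -> r 5 = size A -> r 2 = i ->
  r 4 = prefix_match A o -> i <= size A ->
  o = mcs (take i A) (take (j0 + marks m 0 i) B) ->
  exists r', reaches prog A B (State 24 r m o) (State 35 r' m (mcs A B))
               (10 * (size A - i) + 1).
Proof.
move=> sc; move Ed: (size A - i) => d.
elim: d i r o Ed => [|d IH] i r o Ed H0 H1 H5 H2 H4 le_iA def_o.
  have eq_iA : i = size A by lia.
  have -> : o = mcs A B.
    by case: sc def_o => _ _ sizeB _ _ ->; rewrite eq_iA sizeB !take_size.
  by exists r; rewrite eq_iA in H2; exec_reaches.
have lt_iA : i < size A by lia.
have [a Ai] := onth_exists lt_iA.
have [r' [seg [H0' H1' H5' H2' H4']]] := merge_iter m H0 H1 H5 H2 H4 Ai.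
have [r'' seg'] := IH i.+1 r' _ ltac:(lia) H0' H1' H5' H2' H4' lt_iA (merge_output sc Ai def_o).
exists r''; apply: reaches_leq (reaches_trans seg seg'); lia.
Qed.

Lemma merge_phase j0 m r :
  scanned 0 j0 m -> r 0 = 0 -> r 1 = 1 -> r 5 = size A -> r 4 = prefix_match A (take j0 B) ->
  exists r', reaches prog A B (State 23 r m (take j0 B)) (State 35 r' m (mcs A B))
               (10 * size A + 2).
Proof.
move=> sc H0 H1 H5 H4.
have seg : reaches prog A B (State 23 r m (take j0 B)) (State 24 (upd r 2 0) m (take j0 B)) 1.
  exact: reaches_step (reaches_refl _ _ _ _ _).
have o0 : take j0 B = mcs (take 0 A) (take (j0 + marks m 0 0) B).
  by rewrite marks_nil addn0 take0 mcs0s.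
have [r' seg'] := @merge_loop j0 m (upd r 2 0) _ 0 sc H0 H1 H5 erefl H4 (leq0n _) o0.
by exists r'; apply: reaches_leq (reaches_trans seg seg'); lia.
Qed.

End Program.

Theorem mainTheorem5 :
  exists (P : seq instr) (c : nat),
    forall (T : eqType) (n : nat) (A B : seq T),
      size A <= n -> size B <= n ->
      exists C : seq T,
        halts_within P A B (c * n + c) C /\ minimal_common_supersequence A B C.
Proof.
exists prog, 25 => T n A B le_An le_Bn; exists (mcs A B); split; last exact: mcs_minimal.
have [r1 [m [j0 [scan [H0 H1 H3 sc]]]]] := scan_phase A B.
have le_j0B : j0 <= size B by case: sc => _ _ <- _ _; apply: leq_addr.
have [r2 [copy [H0' H1' H5' H4']]] := copy_phase A m H0 H1 H3 le_j0B.
have [r3 merge] := merge_phase sc H0' H1' H5' H4'.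
apply: (@reaches_halts_within _ _ _ _ (State 35 r3 m (mcs A B))) => //.
by apply: reaches_leq (reaches_trans scan (reaches_trans copy merge)); lia.
Qed.
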